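(* For two-stage edge-weighted bipartite matching with advice, the optimal robustness-consistency tradeoff is the line segment between $(R,C)=(0,1)$ and $(R,C)=(\tfrac12,\tfrac12)$: (i) for every $R\in[0,\tfrac12]$ there is an algorithm that is $R$-robust and $(1-R)$-consistent; (ii) for every $R\ge 0$, every $R$-robust algorithm is at most $(1-R)$-consistent (in particular no algorithm is more than $\tfrac12$-robust).
   Context: Setting (two-stage edge-weighted bipartite matching with advice). A bipartite graph $G=(D,S,E)$ with nonnegative edge weights $w_e$ has offline vertices $S$ and online vertices $D=D_1\sqcup D_2$ arriving in two stages; $E_k$ is the set of edges between $D_k$ and $S$. An algorithm sees $(D_1,S,E_1)$ and the advice (a matching $A\subseteq E_1$), irrevocably chooses a (possibly random) matching $M_1\subseteq E_1$, then sees $E_2$ and chooses a matching $M_2\subseteq E_2$ such that $M_1\cup M_2$ is a matching; its value is the expected total edge weight of $M_1\cup M_2$. $\mathsf{OPT}(G)$ is the maximum weight of a matching in $G$; $\mathsf{ADVICE}(G,A)=w(A)+\max\{w(M): M\subseteq E_2,\ A\cup M\text{ a matching}\}$. An algorithm is $R$-robust if its value is $\ge R\cdot\mathsf{OPT}(G)$ for all $G,A$, and $C$-consistent if its value is $\ge C\cdot\mathsf{ADVICE}(G,A)$ for all $G,A$. *)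

From Stdlib Require Import Reals List Arith Bool Lra.
Import ListNotations.
Open Scope R_scope.

(** Online and offline vertices are named by natural numbers (separate name
    spaces: the first component is always online, the second offline). *)
Definition wedge : Type := (nat * nat * R)%type.
Definition on (e : wedge) : nat := fst (fst e).
Definition off (e : wedge) : nat := snd (fst e).
Definition wt (e : wedge) : R := snd e.

Definition weight (M : list wedge) : R := fold_right Rplus 0 (map wt M).

Fixpoint matchingb (M : list wedge) : bool :=
  match M with
  | [] => true
  | e :: t =>
      forallb (fun f => andb (negb (Nat.eqb (on e) (on f))) (negb (Nat.eqb (off e) (off f)))) t
      && matchingb t
  end.
Definition is_matching (M : list wedge) : Prop := matchingb M = true.

Fixpoint sublists {A : Type} (l : list A) : list (list A) :=
  match l with
  | [] => [[]]
  | x :: t => let s := sublists t in map (cons x) s ++ s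
  end.

(** Maximum of a list of reals (0 for the empty list; all values used below
    are >= 0 and the empty matching always occurs). *)
Definition maxR (l : list R) : R := fold_right Rmax 0 l.

Record instance : Type := mkInstance {
  D1 : list nat; D2 : list nat; S : list nat;
  E1 : list wedge; E2 : list wedge }.

Definition well_formed (G : instance) : Prop :=
  NoDup (D1 G) /\ NoDup (D2 G) /\ NoDup (S G) /\
  (forall d, In d (D1 G) -> ~ In d (D2 G)) /\
  (forall e, In e (E1 G) -> In (on e) (D1 G) /\ In (off e) (S G) /\ 0 <= wt e) /\
  (forall e, In e (E2 G) -> In (on e) (D2 G) /\ In (off e) (S G) /\ 0 <= wt e) /\
  NoDup (map (@fst (nat * nat) R) (E1 G ++ E2 G)).

Definition advice_ok (G : instance) (A : list wedge) : Prop :=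
  is_matching A /\ incl A (E1 G).

Definition OPT (G : instance) : R :=
  maxR (map weight (filter matchingb (sublists (E1 G ++ E2 G)))).

Definition ADVICE (G : instance) (A : list wedge) : R :=
  weight A + maxR (map weight (filter (fun M => matchingb (A ++ M)) (sublists (E2 G)))).

(** Finitely supported probability distributions over edge sets
    (every distribution on the finitely many sub-matchings of a finite edge
    set is of this form). *)
Definition dist : Type := list (R * list wedge).
Definition is_dist (p : dist) : Prop :=
  (forall q, In q p -> 0 <= fst q) /\ fold_right Rplus 0 (map fst p) = 1.

(** Stage 1 sees (D1, S, E1 with weights) and the advice A, and outputs a
    distribution over M1.
    Stage 2 additionally sees the realized M1 and (D2, E2 with weights), and
    outputs a distribution over M2. *)
Record algorithm : Type := mkAlg {
  stage1 : list nat -> list nat -> list wedge -> list wedge -> dist;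
  stage2 : list nat -> list nat -> list wedge -> list wedge -> list wedge ->
           list nat -> list wedge -> dist }.

Definition run1 (alg : algorithm) (G : instance) (A : list wedge) : dist :=
  stage1 alg (D1 G) (S G) (E1 G) A.
Definition run2 (alg : algorithm) (G : instance) (A M1 : list wedge) : dist :=
  stage2 alg (D1 G) (S G) (E1 G) A M1 (D2 G) (E2 G).

Definition valid_alg (alg : algorithm) : Prop :=
  forall G A, well_formed G -> advice_ok G A ->
    is_dist (run1 alg G A) /\
    forall q1, In q1 (run1 alg G A) -> 0 < fst q1 ->
      is_matching (snd q1) /\ incl (snd q1) (E1 G) /\
      is_dist (run2 alg G A (snd q1)) /\
      forall q2, In q2 (run2 alg G A (snd q1)) -> 0 < fst q2 ->
        incl (snd q2) (E2 G) /\ is_matching (snd q1 ++ snd q2).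

Definition value (alg : algorithm) (G : instance) (A : list wedge) : R :=
  fold_right Rplus 0
    (map (fun q1 => fst q1 * (weight (snd q1) +
            fold_right Rplus 0
              (map (fun q2 => fst q2 * weight (snd q2)) (run2 alg G A (snd q1)))))
       (run1 alg G A)).

Definition robust (Rr : R) (alg : algorithm) : Prop :=
  forall G A, well_formed G -> advice_ok G A -> value alg G A >= Rr * OPT G.

Definition consistent (C : R) (alg : algorithm) : Prop :=
  forall G A, well_formed G -> advice_ok G A -> value alg G A >= C * ADVICE G A.

From Pilot Require Import Defs.
From Stdlib Require Import Reals List Lra.
Import ListNotations.
Open Scope R_scope.

(** For [0 <= r <= 1/2] the algorithm [mix_alg r] picks, in
    stage 1, the advice [A] with probability [1 - 2r], a maximum-weight
    matching of [E1] with probability [r], and the empty matching with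
    probability [r]; stage 2 completes greedily-optimally.  Its value is at
    least [(1 - 2r) * follow + r * greedy], where [follow] (advice plus its
    best completion) dominates ADVICE and [greedy] (best E1-matching plus best
    E2-matching) dominates both ADVICE and OPT; this gives [r]-robustness and
    [(1 - r)]-consistency.

    The instances [G1] (one edge of weight 1) and [G2 W]
    (the same edge plus a competing second-stage edge of weight [W]) look the
    same in stage 1, so an algorithm matches the first edge with the same
    probability [p] on both.  Robustness on [G1] forces [R <= p], while the
    value on [G2 W] is at most [(1 - W) p + W]; letting [W] grow shows that any
    guarantee [X * W] on [G2 W] satisfies [X <= 1 - R].  Taking [X = R] gives
    [R <= 1/2]; taking [X = C] gives [C <= 1 - R]. *)

Lemma sum_le {A : Type} (f g : A -> R) (l : list A) :
  (forall x, In x l -> f x <= g x) ->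
  fold_right Rplus 0 (map f l) <= fold_right Rplus 0 (map g l).
Proof. induction l; simpl; intros H; [lra|]. apply Rplus_le_compat; auto. Qed.

Definition expected (p : Defs.dist) (f : list wedge -> R) : R :=
  fold_right Rplus 0 (map (fun q => fst q * f (snd q)) p).

Lemma value_expected (alg : algorithm) (G : instance) (A : list wedge) :
  value alg G A =
  expected (run1 alg G A)
    (fun M1 => weight M1 + expected (run2 alg G A M1) weight).
Proof. reflexivity. Qed.

Lemma expected_le (p : Defs.dist) (f g : list wedge -> R) :
  (forall q, In q p -> 0 <= fst q) ->
  (forall q, In q p -> 0 < fst q -> f (snd q) <= g (snd q)) ->
  expected p f <= expected p g.
Proof.
  intros Hnn Hfg. apply sum_le. intros q Hq.
  destruct (Rle_lt_or_eq_dec 0 (fst q) (Hnn q Hq)) as [Hpos|Hzero].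
  - apply Rmult_le_compat_l; auto.
  - rewrite <- Hzero. lra.
Qed.

Lemma expected_affine (p : Defs.dist) (f : list wedge -> R) (a b : R) :
  is_dist p -> expected p (fun M => a * f M + b) = a * expected p f + b.
Proof.
  intros [_ Hmass].
  enough (E : expected p (fun M => a * f M + b) =
              a * expected p f + b * fold_right Rplus 0 (map fst p))
    by (rewrite E, Hmass; ring).
  unfold expected. clear Hmass. induction p; simpl; [ring|]. rewrite IHp. ring.
Qed.

Lemma expected_const (p : Defs.dist) (c : R) : is_dist p -> expected p (fun _ => c) = c.
Proof.
  intros [_ Hmass].
  enough (E : expected p (fun _ => c) = c * fold_right Rplus 0 (map fst p))
    by (rewrite E, Hmass; ring).
  unfold expected. clear Hmass. induction p; simpl; [ring|]. rewrite IHp. ring.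
Qed.

Lemma maxR_ge (l : list R) (x : R) : In x l -> x <= maxR l.
Proof.
  induction l; simpl; intros H; [destruct H|].
  destruct H as [<-|H]; [apply Rmax_l|].
  eapply Rle_trans; [apply IHl; auto|apply Rmax_r].
Qed.

Lemma maxR_le (l : list R) (X : R) :
  0 <= X -> (forall x, In x l -> x <= X) -> maxR l <= X.
Proof. induction l; simpl; intros H0 H; [lra|]. apply Rmax_lub; auto. Qed.

Lemma weight_app (a b : list wedge) : weight (a ++ b) = weight a + weight b.
Proof. unfold weight. rewrite map_app, fold_right_app. induction (map wt a); simpl; lra. Qed.

Lemma weight_nonneg (M : list wedge) : (forall e, In e M -> 0 <= wt e) -> 0 <= weight M.
Proof.
  induction M as [|e M IH]; intros H; unfold weight; simpl; [lra|].
  assert (0 <= wt e) by (apply H; left; auto).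
  assert (0 <= weight M) by (apply IH; intros; apply H; right; auto).
  unfold weight in *. lra.
Qed.

Lemma sublists_incl (l M : list wedge) : In M (sublists l) -> incl M l.
Proof.
  revert M; induction l; simpl; intros M H.
  - destruct H as [<-|[]]. apply incl_nil_l.
  - apply in_app_or in H. destruct H as [H|H].
    + apply in_map_iff in H. destruct H as [M' [<- H]].
      apply incl_cons; [left; auto|]. apply incl_tl; auto.
    + apply incl_tl; auto.
Qed.

Lemma nil_in_sublists (l : list wedge) : In [] (sublists l).
Proof. induction l; simpl; auto. apply in_or_app; right; auto. Qed.

Lemma sublists_app (l1 l2 M : list wedge) : In M (sublists (l1 ++ l2)) ->
  exists s1 s2, M = s1 ++ s2 /\ In s1 (sublists l1) /\ In s2 (sublists l2).
Proof.
  revert M; induction l1; simpl; intros M H.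
  - exists [], M; auto.
  - apply in_app_or in H. destruct H as [H|H].
    + apply in_map_iff in H. destruct H as [M' [<- H]].
      destruct (IHl1 _ H) as [s1 [s2 [-> [H1 H2]]]].
      exists (a :: s1), s2. repeat split; auto.
      apply in_or_app; left; apply in_map; auto.
    + destruct (IHl1 _ H) as [s1 [s2 [-> [H1 H2]]]].
      exists s1, s2. repeat split; auto. apply in_or_app; right; auto.
Qed.

Lemma matchingb_app_l (a b : list wedge) : matchingb (a ++ b) = true -> matchingb a = true.
Proof.
  induction a; simpl; auto. intros H. apply andb_prop in H. destruct H as [H1 H2].
  rewrite forallb_app in H1. apply andb_prop in H1. destruct H1 as [H1 _].
  rewrite H1; simpl; auto.
Qed.

Lemma matchingb_app_r (a b : list wedge) : matchingb (a ++ b) = true -> matchingb b = true.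
Proof. induction a; simpl; auto. intros H. apply andb_prop in H. destruct H; auto. Qed.

(** [best P d l] is a heaviest sub-list of [l] satisfying [P], or the default
    [d] if [d] is heavier than all of them. *)

Definition heaviest (d : list wedge) (l : list (list wedge)) : list wedge :=
  fold_right (fun M b => if Rle_dec (weight b) (weight M) then M else b) d l.

Definition best (P : list wedge -> bool) (d l : list wedge) : list wedge :=
  heaviest d (filter P (sublists l)).

Lemma heaviest_cases (d : list wedge) (l : list (list wedge)) :
  heaviest d l = d \/ In (heaviest d l) l.
Proof.
  induction l; simpl; auto. destruct (Rle_dec _ _); [right; left; auto|].
  destruct IHl; [left|right; right]; auto.
Qed.

Lemma heaviest_ge (d : list wedge) (l : list (list wedge)) :
  weight d <= weight (heaviest d l) /\
  forall M, In M l -> weight M <= weight (heaviest d l).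
Proof.
  induction l; simpl; [split; [lra|intros _ []]|].
  destruct IHl as [Hd Hl]. destruct (Rle_dec _ _); split; try lra.
  - intros M [<-|HM]; [lra|]. specialize (Hl M HM); lra.
  - intros M [<-|HM]; [lra|auto].
Qed.

Lemma best_cases (P : list wedge -> bool) (d l : list wedge) :
  best P d l = d \/ (In (best P d l) (sublists l) /\ P (best P d l) = true).
Proof.
  unfold best. destruct (heaviest_cases d (filter P (sublists l))) as [E|E]; auto.
  right. apply filter_In in E. exact E.
Qed.

Lemma best_ge_default (P : list wedge -> bool) (d l : list wedge) :
  weight d <= weight (best P d l).
Proof. apply (proj1 (heaviest_ge d _)). Qed.

Lemma best_ge (P : list wedge -> bool) (d l M : list wedge) :
  In M (sublists l) -> P M = true -> weight M <= weight (best P d l).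
Proof. intros. apply heaviest_ge, filter_In; auto. Qed.

Lemma maxR_le_best (P Q : list wedge -> bool) (d l : list wedge) :
  (forall M, P M = true -> Q M = true) -> 0 <= weight d ->
  maxR (map weight (filter P (sublists l))) <= weight (best Q d l).
Proof.
  intros HPQ Hd. apply maxR_le; [eapply Rle_trans; [exact Hd|apply best_ge_default]|].
  intros x Hx. apply in_map_iff in Hx. destruct Hx as [M [<- HM]].
  apply filter_In in HM. destruct HM. apply best_ge; auto.
Qed.

Definition completion (M1 E2 : list wedge) : list wedge :=
  best (fun M => matchingb (M1 ++ M)) [] E2.

(** Heaviest matching of [E1]; the advice is the default, so that it is never
    lighter than the advice. *)
Definition best_matching (E1 A : list wedge) : list wedge := best matchingb A E1.

Lemma completion_ok (M1 E2 : list wedge) : matchingb M1 = true ->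
  matchingb (M1 ++ completion M1 E2) = true /\ incl (completion M1 E2) E2.
Proof.
  intros H. unfold completion.
  destruct (best_cases (fun M => matchingb (M1 ++ M)) [] E2) as [E|[Hin Hm]].
  - rewrite E, app_nil_r. split; [auto|apply incl_nil_l].
  - split; [auto|apply sublists_incl; auto].
Qed.

Lemma completion_nonneg (M1 E2 : list wedge) : 0 <= weight (completion M1 E2).
Proof. apply (best_ge_default _ [] E2). Qed.

Lemma best_matching_ok (E1 A : list wedge) : is_matching A -> incl A E1 ->
  is_matching (best_matching E1 A) /\ incl (best_matching E1 A) E1.
Proof.
  intros. unfold best_matching. destruct (best_cases matchingb A E1) as [E|[Hin Hm]].
  - rewrite E; auto.
  - split; [auto|apply sublists_incl; auto].
Qed.

Lemma best_matching_nonneg (E1 A : list wedge) : 0 <= weight (best_matching E1 A).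
Proof. apply (best_ge matchingb A E1 []); [apply nil_in_sublists|reflexivity]. Qed.

(** ** Achievability: mixing the advice with the advice-free optimum *)

Definition mix_alg (r : R) : algorithm :=
  mkAlg (fun _ _ E1 A => [(1 - 2 * r, A); (r, best_matching E1 A); (r, [])])
        (fun _ _ _ _ M1 _ E2 => [(1, completion M1 E2)]).

Lemma mix_alg_valid (r : R) : 0 <= r <= 1/2 -> valid_alg (mix_alg r).
Proof.
  intros Hr G A _ [HA HAi]. unfold run1, run2; cbn [mix_alg stage1 stage2 fst snd].
  split.
  - split; [|simpl; lra]. intros q Hq.
    destruct Hq as [<-|[<-|[<-|[]]]]; simpl; lra.
  - intros q1 Hq1 _.
    assert (HM : is_matching (snd q1) /\ incl (snd q1) (Defs.E1 G)).
    { destruct Hq1 as [<-|[<-|[<-|[]]]]; simpl.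
      - auto.
      - apply best_matching_ok; auto.
      - split; [reflexivity|apply incl_nil_l]. }
    destruct HM as [HM HMi]. split; [|split; [|split]]; auto.
    + split; [intros q [<-|[]]|]; simpl; lra.
    + intros q2 [<-|[]] _. simpl. destruct (completion_ok (snd q1) (Defs.E2 G) HM); auto.
Qed.

Definition follow (G : instance) (A : list wedge) : R :=
  weight A + weight (completion A (Defs.E2 G)).

Definition greedy (G : instance) (A : list wedge) : R :=
  weight (best_matching (Defs.E1 G) A) + weight (completion [] (Defs.E2 G)).

Lemma mix_alg_value (r : R) (G : instance) (A : list wedge) : 0 <= r ->
  (1 - 2 * r) * follow G A + r * greedy G A <= value (mix_alg r) G A.
Proof.
  intros Hr. unfold value, run1, run2, follow, greedy.
  cbn [mix_alg stage1 stage2 map fold_right fst snd].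
  change (weight []) with 0.
  assert (0 <= r * weight (completion (best_matching (Defs.E1 G) A) (Defs.E2 G)))
    by (apply Rmult_le_pos; auto using completion_nonneg).
  lra.
Qed.

Lemma advice_le_follow (G : instance) (A : list wedge) : ADVICE G A <= follow G A.
Proof. apply Rplus_le_compat_l, maxR_le_best; [auto|unfold weight; simpl; lra]. Qed.

Lemma advice_le_greedy (G : instance) (A : list wedge) : ADVICE G A <= greedy G A.
Proof.
  apply Rplus_le_compat; [apply best_ge_default|].
  apply maxR_le_best; [apply matchingb_app_r|unfold weight; simpl; lra].
Qed.

Lemma opt_le_greedy (G : instance) (A : list wedge) : OPT G <= greedy G A.
Proof.
  unfold OPT, greedy. apply maxR_le.
  { pose proof (best_matching_nonneg (Defs.E1 G) A).
    pose proof (completion_nonneg [] (Defs.E2 G)). lra. }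
  intros x Hx. apply in_map_iff in Hx. destruct Hx as [M [<- HM]].
  apply filter_In in HM. destruct HM as [HM Hm].
  destruct (sublists_app _ _ _ HM) as [s1 [s2 [-> [H1 H2]]]].
  rewrite weight_app. apply Rplus_le_compat.
  - apply best_ge; auto. eapply matchingb_app_l; eauto.
  - apply best_ge; auto. eapply matchingb_app_r; eauto.
Qed.

Lemma mix_alg_robust (r : R) : 0 <= r <= 1/2 -> robust r (mix_alg r).
Proof.
  intros Hr G A Hwf [_ HAi].
  assert (HwA : 0 <= weight A).
  { apply weight_nonneg. intros e He.
    destruct Hwf as [_ [_ [_ [_ [HE1 _]]]]]. apply (HE1 e (HAi e He)). }
  pose proof (completion_nonneg A (Defs.E2 G)).
  pose proof (opt_le_greedy G A). pose proof (mix_alg_value r G A (proj1 Hr)).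
  unfold follow in *. nra.
Qed.

Lemma mix_alg_consistent (r : R) : 0 <= r <= 1/2 -> consistent (1 - r) (mix_alg r).
Proof.
  intros Hr G A _ _.
  pose proof (advice_le_follow G A). pose proof (advice_le_greedy G A).
  pose proof (mix_alg_value r G A (proj1 Hr)). nra.
Qed.

(** ** Impossibility *)

Lemma value_le_bound (alg : algorithm) (G : instance) (A : list wedge)
    (g : list wedge -> R) :
  valid_alg alg -> well_formed G -> advice_ok G A ->
  (forall M1 M2, is_matching M1 -> incl M1 (Defs.E1 G) -> incl M2 (Defs.E2 G) ->
     is_matching (M1 ++ M2) -> weight M1 + weight M2 <= g M1) ->
  value alg G A <= expected (run1 alg G A) g.
Proof.
  intros Hv Hwf HA Hg. destruct (Hv G A Hwf HA) as [[Hnn _] Hrun].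
  rewrite value_expected. apply expected_le; auto. intros q1 Hq1 Hpos.
  destruct (Hrun q1 Hq1 Hpos) as [Hm1 [Hi1 [Hd2 Hrun2]]].
  assert (Hstage2 : expected (run2 alg G A (snd q1)) weight <=
                    expected (run2 alg G A (snd q1)) (fun _ => g (snd q1) - weight (snd q1))).
  { apply expected_le; [apply Hd2|]. intros q2 Hq2 Hpos2.
    destruct (Hrun2 q2 Hq2 Hpos2).
    assert (weight (snd q1) + weight (snd q2) <= g (snd q1)) by auto. lra. }
  rewrite expected_const in Hstage2 by exact Hd2. lra.
Qed.

Definition e1 : wedge := (0%nat, 0%nat, 1).
Definition e2 (W : R) : wedge := (1%nat, 0%nat, W).
Definition G1 : instance := mkInstance [0%nat] [] [0%nat] [e1] [].
Definition G2 (W : R) : instance := mkInstance [0%nat] [1%nat] [0%nat] [e1] [e2 W].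

Ltac solve_well_formed :=
  unfold well_formed; simpl; repeat split;
  repeat match goal with H : _ \/ False |- _ => destruct H as [<-|[]] end;
  simpl; auto; try lra;
  try (intros ? [<-|[]] [H|[]]; discriminate);
  repeat (constructor; [simpl; intuition discriminate|]); constructor.

Lemma G1_well_formed : well_formed G1.
Proof. solve_well_formed. Qed.

Lemma G2_well_formed (W : R) : 0 <= W -> well_formed (G2 W).
Proof. intros HW. solve_well_formed. Qed.

Lemma empty_advice_ok (G : instance) : advice_ok G [].
Proof. split; [reflexivity|apply incl_nil_l]. Qed.

Lemma OPT_G1 : OPT G1 = 1.
Proof.
  unfold OPT, maxR, weight; simpl. unfold Rmax. repeat destruct Rle_dec; lra.
Qed.

Lemma OPT_G2_ge (W : R) : W <= OPT (G2 W).
Proof.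
  unfold OPT. replace W with (weight [e2 W]) at 1 by (unfold weight; simpl; ring).
  apply maxR_ge, in_map. simpl. auto.
Qed.

Lemma ADVICE_G2_ge (W : R) : W <= ADVICE (G2 W) [].
Proof.
  unfold ADVICE. change (weight []) with 0. rewrite Rplus_0_l.
  replace W with (weight [e2 W]) at 1 by (unfold weight; simpl; ring).
  apply maxR_ge, in_map. simpl. auto.
Qed.

Lemma matching_in_singleton (x : wedge) (M : list wedge) :
  incl M [x] -> matchingb M = true -> M = [] \/ M = [x].
Proof.
  intros Hi Hm. destruct M as [|a [|b t]]; auto.
  - right. destruct (Hi a (or_introl eq_refl)) as [<-|[]]; auto.
  - destruct (Hi a (or_introl eq_refl)) as [<-|[]].
    destruct (Hi b (or_intror (or_introl eq_refl))) as [<-|[]].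
    simpl in Hm. rewrite Nat.eqb_refl in Hm. discriminate.
Qed.

(** Expected first-stage weight on [G1], i.e. the probability of taking [e1]. *)
Definition first_edge_prob (alg : algorithm) : R := expected (run1 alg G1 []) weight.

(** On [G1] nothing can be added in stage 2. *)
Lemma value_G1_le (alg : algorithm) : valid_alg alg ->
  value alg G1 [] <= first_edge_prob alg.
Proof.
  intros Hv. apply value_le_bound; auto using G1_well_formed, empty_advice_ok.
  intros M1 M2 _ _ Hi2 _. apply incl_l_nil in Hi2. subst M2.
  unfold weight at 2; simpl. lra.
Qed.

(** [G2 W] has the same first stage as [G1]; if [e1] is taken, [e2 W] is
    blocked, so the value is at most [(1 - W) p + W]. *)
Lemma value_G2_le (alg : algorithm) (W : R) : 0 <= W -> valid_alg alg ->
  value alg (G2 W) [] <= (1 - W) * first_edge_prob alg + W.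
Proof.
  intros HW Hv. destruct (Hv (G2 W) [] (G2_well_formed W HW) (empty_advice_ok _)) as [Hd _].
  unfold first_edge_prob. change (run1 alg G1 []) with (run1 alg (G2 W) []).
  rewrite <- expected_affine by exact Hd.
  apply value_le_bound; auto using G2_well_formed, empty_advice_ok.
  intros M1 M2 Hm1 Hi1 Hi2 Hm. simpl in Hi1, Hi2.
  destruct (matching_in_singleton _ _ Hi1 Hm1) as [->| ->];
  destruct (matching_in_singleton _ _ Hi2 (matchingb_app_r _ _ Hm)) as [->| ->];
  try discriminate; unfold weight; simpl; lra.
Qed.

Lemma large_weight_limit (R0 p X : R) :
  R0 <= p -> (forall W, 1 <= W -> X * W <= (1 - W) * p + W) -> X <= 1 - R0.
Proof.
  intros Hp Hbound. destruct (Rle_dec X (1 - R0)) as [|Hgt]; auto.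
  set (k := X - 1 + R0). assert (Hk : 0 < k) by (unfold k; lra).
  set (W := 1 + (Rabs R0 + 1) / k).
  assert (HWk : W * k = k + Rabs R0 + 1) by (unfold W; field; lra).
  assert (HW1 : 1 <= W).
  { unfold W. pose proof (Rabs_pos R0).
    assert (0 < (Rabs R0 + 1) / k) by (apply Rdiv_lt_0_compat; lra). lra. }
  specialize (Hbound W HW1). pose proof (Rle_abs R0).
  assert ((1 - W) * p <= (1 - W) * R0) by (apply Rmult_le_compat_neg_l; lra).
  unfold k in HWk. nra.
Qed.

Lemma tradeoff_bound (R0 X : R) (alg : algorithm) :
  valid_alg alg -> robust R0 alg ->
  (forall W, 1 <= W -> X * W <= value alg (G2 W) []) -> X <= 1 - R0.
Proof.
  intros Hv Hr HX. apply (large_weight_limit R0 (first_edge_prob alg)).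
  - pose proof (Hr G1 [] G1_well_formed (empty_advice_ok _)) as HG1.
    rewrite OPT_G1 in HG1. pose proof (value_G1_le alg Hv). lra.
  - intros W HW. eapply Rle_trans; [apply HX; auto|].
    apply value_G2_le; auto; lra.
Qed.

Lemma robust_le_half (R0 : R) (alg : algorithm) :
  valid_alg alg -> robust R0 alg -> R0 <= 1 / 2.
Proof.
  intros Hv Hr. destruct (Rle_dec R0 0); [lra|].
  enough (R0 <= 1 - R0) by lra.
  apply (tradeoff_bound R0 R0 alg Hv Hr). intros W HW.
  pose proof (Hr (G2 W) [] (G2_well_formed W ltac:(lra)) (empty_advice_ok _)).
  pose proof (OPT_G2_ge W).
  assert (R0 * W <= R0 * OPT (G2 W)) by (apply Rmult_le_compat_l; lra). lra.
Qed.

Lemma consistency_le (R0 C : R) (alg : algorithm) :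
  valid_alg alg -> robust R0 alg -> consistent C alg -> C <= 1 - R0.
Proof.
  intros Hv Hr Hc. destruct (Rle_dec C (1 - R0)) as [|Hgt]; auto.
  pose proof (robust_le_half R0 alg Hv Hr).
  apply (tradeoff_bound R0 C alg Hv Hr). intros W HW.
  pose proof (Hc (G2 W) [] (G2_well_formed W ltac:(lra)) (empty_advice_ok _)).
  pose proof (ADVICE_G2_ge W).
  assert (C * W <= C * ADVICE (G2 W) []) by (apply Rmult_le_compat_l; lra). lra.
Qed.

Theorem mainTheorem7 :
  (forall Rr : R, 0 <= Rr <= 1 / 2 ->
     exists alg : algorithm,
       valid_alg alg /\ robust Rr alg /\ consistent (1 - Rr) alg) /\
  (forall (Rr C : R) (alg : algorithm), 0 <= Rr ->
     valid_alg alg -> robust Rr alg -> consistent C alg -> C <= 1 - Rr) /\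
  (forall (Rr : R) (alg : algorithm), valid_alg alg -> robust Rr alg -> Rr <= 1 / 2).
Proof.
  split; [|split].
  - intros Rr Hr. exists (mix_alg Rr).
    split; [|split]; auto using mix_alg_valid, mix_alg_robust, mix_alg_consistent.
  - intros Rr C alg _. apply consistency_le.
  - apply robust_le_half.
Qed.
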